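(* Let $h_1,h_2\in\mathbb{C}\setminus\{0\}$ with $|h_1|\le|h_2|$, deadlines $D_1<D_2$, minimum blocklength $\hat m>0$, power budget $P_{\max}>0$, packet sizes $N_1,N_2>0$ and error probabilities $\epsilon_1,\epsilon_2\in(0,1)$. For $k=1,2$ define, for $m>0,\gamma>0$, $$F_k(m,\gamma)=\sqrt{\frac{1}{m}\left(1-\frac{1}{(\gamma+1)^2}\right)}\,\frac{Q^{-1}(\epsilon_k)}{\ln 2}-\log_2(1+\gamma)+\frac{N_k}{m},$$ and let $\Gamma_k(m)$ denote the implicit function defined by $F_k(m,\Gamma_k(m))=0$, $\Gamma_k(m)>0$. Consider the problem $$\min_{\{m_k,p_k,\gamma_k\}_{k=1,2}} m_1p_1+m_2p_2$$ subject to $F_k(m_k,\gamma_k)=0$, $\hat m\le m_k\le D_k$, $p_k\ge0$ for $k=1,2$, $p_1+p_2\le P_{\max}$, $\gamma_1=\frac{p_1|h_1|^2}{p_2|h_1|^2+1}$, $\gamma_2=p_2|h_2|^2$. Suppose that $\frac{Q^{-1}(\epsilon_k)}{\sqrt{N_k}}\le \frac{2\sqrt{\ln 2}}{4-\sqrt2}=0.64394\ldots$ for $k=1,2$ and that the problem is feasible. Then an optimal solution is $$m_k^*=D_k,\quad \gamma_k^*=\Gamma_k(D_k)\ (k=1,2),\quad p_1^*=\frac{\gamma_1^*\gamma_2^*}{|h_2|^2}+\frac{\gamma_1^*}{|h_1|^2},\quad p_2^*=\frac{\gamma_2^*}{|h_2|^2}.$$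
   Context: $Q^{-1}$ is the inverse of the Gaussian Q-function. The setting is a two-user single-antenna downlink with superposition coding and unit noise variances; receiver 1 treats receiver 2's signal as noise and receiver 2 performs successive interference cancellation. Blocklengths $m_k$ are treated as continuous variables. The constraint $F_k(m_k,\gamma_k)=0$ is the finite-blocklength rate relation $\frac{N_k}{m_k}=\log_2(1+\gamma_k)-\sqrt{\frac{1}{m_k}\big(1-\frac{1}{(1+\gamma_k)^2}\big)}\frac{Q^{-1}(\epsilon_k)}{\ln2}$. *)

From Stdlib Require Import Reals.
From Coquelicot Require Import Coquelicot.
Open Scope R_scope.

Definition Qfun (x : R) : R :=
  / sqrt (2 * PI) *
  RInt_gen (fun t => exp (- (t ^ 2) / 2)) (at_point x) (Rbar_locally p_infty).

Definition log2 (x : R) : R := ln x / ln 2.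

(* F_k(m, gamma), with qinv = Q^{-1}(eps_k) and N = N_k. *)
Definition Ffun (qinv N m gam : R) : R :=
  sqrt (/ m * (1 - / ((gam + 1) ^ 2))) * qinv / ln 2 - log2 (1 + gam) + N / m.

(* Feasible set of the optimization problem; g1 = |h1|^2, g2 = |h2|^2. *)
Definition feasible (g1 g2 mhat D1 D2 Pmax q1 q2 N1 N2 : R)
  (m1 m2 p1 p2 gam1 gam2 : R) : Prop :=
  Ffun q1 N1 m1 gam1 = 0 /\ Ffun q2 N2 m2 gam2 = 0 /\
  mhat <= m1 <= D1 /\ mhat <= m2 <= D2 /\
  0 <= p1 /\ 0 <= p2 /\ p1 + p2 <= Pmax /\
  gam1 = p1 * g1 / (p2 * g1 + 1) /\ gam2 = p2 * g2.

(* Write a = N ln 2 and v = 1 / sqrt (m γ). Divided by γ, the rate constraint F(m, γ) = 0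
   reads a v^2 + q b(γ) v = C(γ) with b(γ) = sqrt (γ + 2) / (1 + γ) and C(γ) = ln (1 + γ) / γ,
   so along the constraint v = v(γ) is the positive root of a quadratic and its derivative
   follows by implicit differentiation. When q^2 <= (2/3) a, which the threshold on
   Q^{-1}(ε) / sqrt N guarantees, v is nonincreasing while γ v(γ)^2 = 1/m is increasing.
   Hence every feasible (m, γ) with m <= D has Γ(D) <= γ and D Γ(D) <= m γ.
   Under SIC, p2 = γ2 / |h2|^2 and p1 = γ1 γ2 / |h2|^2 + γ1 / |h1|^2, so the total power is
   monotone in (γ1, γ2) and the energy m1 p1 + m2 p2 = (m1 γ1)(γ2 / |h2|^2 + 1 / |h1|^2)
   + m2 γ2 / |h2|^2 is monotone in (m1 γ1, γ2, m2 γ2); the candidate minimizes all of them. *)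

From Stdlib Require Import Reals Lra.
From Coquelicot Require Import Coquelicot.
Open Scope R_scope.

Lemma nondecreasing_of_derive_nonneg (f df : R -> R) (a b : R) :
  a <= b ->
  (forall x, a <= x <= b -> is_derive f x (df x)) ->
  (forall x, a <= x <= b -> 0 <= df x) -> f a <= f b.
Proof.
  intros Hab Hd Hdf.
  destruct (Req_dec a b) as [<- | Hne]; [lra |].
  destruct (MVT_cor3 f df a b) as (c & Hac & Hcb & ->); [lra | |].
  - intros x Hax Hxb; apply is_derive_Reals, Hd; lra.
  - assert (0 <= df c * (b - a)) by (apply Rmult_le_pos; [apply Hdf |]; lra). lra.
Qed.

Lemma quad_pos_root_le a p c z y :
  0 < a -> 0 < z -> a * z ^ 2 + p * z = c -> 0 < c ->
  0 <= y -> c <= a * y ^ 2 + p * y -> z <= y.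
Proof.
  intros Ha Hz Hzc Hc Hy Hcy.
  assert (Hlin : 0 < a * z + p) by (apply Rmult_lt_reg_r with z; nra).
  destruct (Rle_or_lt z y) as [| Hyz]; [lra |].
  assert (0 < (z - y) * (a * (z + y) + p)) by (apply Rmult_lt_0_compat; nra).
  nra.
Qed.

Definition quad_root (a p c : R) : R := (- p + sqrt (p ^ 2 + 4 * a * c)) / (2 * a).

Section QuadRoot.

Variables a p c : R.
Hypotheses (Ha : 0 < a) (Hc : 0 < c).

Lemma quad_root_discr : sqrt (p ^ 2 + 4 * a * c) = 2 * a * quad_root a p c + p.
Proof. unfold quad_root; field; lra. Qed.

Lemma quad_root_eq : a * quad_root a p c ^ 2 + p * quad_root a p c = c.
Proof.
  assert (Hs : sqrt (p ^ 2 + 4 * a * c) ^ 2 = p ^ 2 + 4 * a * c) by (apply pow2_sqrt; nra).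
  rewrite quad_root_discr in Hs. nra.
Qed.

Lemma quad_root_discr_pos : 0 < 2 * a * quad_root a p c + p.
Proof.
  rewrite <- quad_root_discr. apply sqrt_lt_R0. nra.
Qed.

Lemma quad_root_pos : 0 < quad_root a p c.
Proof.
  set (S := sqrt (p ^ 2 + 4 * a * c)).
  assert (HS2 : S ^ 2 = p ^ 2 + 4 * a * c) by (apply pow2_sqrt; nra).
  assert (HS : 0 < S) by (apply sqrt_lt_R0; nra).
  unfold quad_root; fold S; apply Rdiv_lt_0_compat; [| lra].
  destruct (Rle_or_lt S p); nra.
Qed.

Lemma quad_root_unique z : 0 < z -> a * z ^ 2 + p * z = c -> z = quad_root a p c.
Proof.
  intros Hz Hzc. pose proof quad_root_eq. pose proof quad_root_pos.
  apply Rle_antisym; apply (quad_pos_root_le a p c); lra.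
Qed.

End QuadRoot.

Lemma is_derive_quad_root a (p c : R -> R) x dp dc :
  0 < a -> 0 < c x -> is_derive p x dp -> is_derive c x dc ->
  is_derive (fun y => quad_root a (p y) (c y)) x
    ((dc - dp * quad_root a (p x) (c x)) / (2 * a * quad_root a (p x) (c x) + p x)).
Proof.
  intros Ha Hc Hp Hcd.
  pose proof (quad_root_discr_pos a (p x) (c x) Ha Hc) as HS.
  rewrite <- (quad_root_discr a (p x) (c x) Ha) in HS |- *.
  unfold quad_root.
  auto_derive.
  - repeat split; try (eexists; eassumption). nra.
  - assert (Ep : Derive (fun y : R => p y) x = dp) by (apply is_derive_unique; exact Hp).
    assert (Ec : Derive (fun y : R => c y) x = dc) by (apply is_derive_unique; exact Hcd).
    rewrite Ep, Ec.
    replace (p x * (p x * 1)) with (p x ^ 2) by ring.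
    field; lra.
Qed.

Lemma pow2_le_of_le_sqrt x y : 0 < x -> x <= sqrt y -> x ^ 2 <= y.
Proof.
  intros Hx Hxy.
  destruct (Rle_or_lt y 0) as [Hy | Hy].
  { rewrite sqrt_neg_0 in Hxy; lra. }
  rewrite <- (pow2_sqrt y) by lra. apply pow_incr; lra.
Qed.

Lemma ln_1p_le g : -1 < g -> ln (1 + g) <= g.
Proof.
  intros Hg. rewrite <- (ln_exp g) at 2. apply ln_le; [lra | apply exp_ineq1_le].
Qed.

Lemma ln_1p_ge_div g : 0 <= g -> 2 * g / (2 + g) <= ln (1 + g).
Proof.
  intros Hg.
  assert (H := nondecreasing_of_derive_nonneg (fun y => ln (1 + y) - 2 * y / (2 + y))
     (fun y => y ^ 2 / ((1 + y) * (2 + y) ^ 2)) 0 g Hg).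
  simpl in H. rewrite Rplus_0_r, ln_1 in H.
  enough (0 - 2 * 0 / (2 + 0) <= ln (1 + g) - 2 * g / (2 + g)) by lra.
  apply H.
  - intros x Hx. auto_derive; [lra | field; lra].
  - intros x Hx. apply Rle_mult_inv_pos; [nra |].
    apply Rmult_lt_0_compat; nra.
Qed.

(* [disp_ratio g ^ 2 = V g / g] for the channel dispersion [V g = 1 - 1 / (1 + g) ^ 2]. *)
Definition disp_ratio (g : R) : R := sqrt (g + 2) / (1 + g).
Definition disp_ratio' (g : R) : R := - (g + 3) / (2 * sqrt (g + 2) * (1 + g) ^ 2).
Definition cap_ratio (g : R) : R := ln (1 + g) / g.
Definition cap_ratio' (g : R) : R := (g / (1 + g) - ln (1 + g)) / g ^ 2.

Lemma is_derive_disp_ratio g : -1 < g -> is_derive disp_ratio g (disp_ratio' g).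
Proof.
  intros Hg. unfold disp_ratio, disp_ratio'.
  assert (Hs : 0 < sqrt (g + 2)) by (apply sqrt_lt_R0; lra).
  auto_derive; [lra |].
  replace (g + 3) with (2 * sqrt (g + 2) ^ 2 - (1 + g)) by (rewrite pow2_sqrt; lra).
  field; lra.
Qed.

Lemma is_derive_cap_ratio g : 0 < g -> is_derive cap_ratio g (cap_ratio' g).
Proof.
  intros Hg. unfold cap_ratio, cap_ratio'.
  auto_derive; [lra | field; lra].
Qed.

Lemma disp_ratio_pos g : -1 < g -> 0 < disp_ratio g.
Proof. intros Hg. apply Rdiv_lt_0_compat; [apply sqrt_lt_R0 |]; lra. Qed.

Lemma disp_ratio'_neg g : -1 < g -> disp_ratio' g < 0.
Proof.
  intros Hg. unfold disp_ratio', Rdiv.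
  assert (0 < sqrt (g + 2)) by (apply sqrt_lt_R0; lra).
  assert (0 < / (2 * sqrt (g + 2) * (1 + g) ^ 2))
    by (apply Rinv_0_lt_compat, Rmult_lt_0_compat; [lra | apply pow_lt; lra]).
  nra.
Qed.

Lemma cap_ratio_pos g : 0 < g -> 0 < cap_ratio g.
Proof.
  intros Hg. apply Rdiv_lt_0_compat; [| lra].
  rewrite <- ln_1. apply ln_increasing; lra.
Qed.

Lemma cap_ratio_le_1 g : 0 < g -> cap_ratio g <= 1.
Proof.
  intros Hg. unfold cap_ratio. pose proof (ln_1p_le g ltac:(lra)).
  apply (Rmult_le_reg_r g); [lra |]. field_simplify; lra.
Qed.

Lemma cap_ratio'_nonpos g : 0 < g -> cap_ratio' g <= 0.
Proof.
  intros Hg. pose proof (ln_1p_ge_div g ltac:(lra)). unfold cap_ratio'.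
  assert (g / (1 + g) <= 2 * g / (2 + g)).
  { apply Rmult_le_reg_r with ((1 + g) * (2 + g)); [nra |]. field_simplify; nra. }
  apply Rmult_le_0_r; [lra | left; apply Rinv_0_lt_compat, pow_lt; lra].
Qed.

Lemma cap_ratio_le_deriv_ratio_quadratic g : 0 < g ->
  cap_ratio g <= 3 / 2 * (cap_ratio' g / disp_ratio' g) ^ 2
                 + disp_ratio g * (cap_ratio' g / disp_ratio' g).
Proof.
  intros Hg.
  pose proof (ln_1p_ge_div g ltac:(lra)) as HL.
  assert (Hs : 0 < sqrt (g + 2)) by (apply sqrt_lt_R0; lra).
  assert (Hs2 : sqrt (g + 2) ^ 2 = g + 2) by (apply pow2_sqrt; lra).
  unfold cap_ratio, cap_ratio', disp_ratio, disp_ratio'.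
  set (L := ln (1 + g)) in *. set (s := sqrt (g + 2)) in *.
  (* The difference of the two sides is increasing in [A], and nonnegative at the lower
     bound [A0] that [ln_1p_ge_div] gives for [A]. *)
  set (A := L - g / (1 + g)).
  set (A0 := g ^ 2 / ((2 + g) * (1 + g))).
  assert (HA0 : 0 <= A0) by (unfold A0; apply Rle_mult_inv_pos; nra).
  assert (HA : A0 <= A).
  { unfold A, A0. replace (g ^ 2 / ((2 + g) * (1 + g))) with (2 * g / (2 + g) - g / (1 + g))
      by (field; lra). lra. }
  set (alpha := 6 * (g + 2) * (1 + g) ^ 4 / (g ^ 4 * (g + 3) ^ 2)).
  set (beta := (g ^ 2 + 3 * g + 4) / (g ^ 2 * (g + 3))).
  assert (Halpha : 0 <= alpha).
  { unfold alpha. apply Rle_mult_inv_pos.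
    - apply Rmult_le_pos; [lra | apply pow_le; lra].
    - apply Rmult_lt_0_compat; apply pow_lt; lra. }
  assert (Hbeta : 0 <= beta) by (unfold beta; apply Rle_mult_inv_pos; nra).
  assert (E : 3 / 2 * ((g / (1 + g) - L) / g ^ 2 / (- (g + 3) / (2 * s * (1 + g) ^ 2))) ^ 2
              + s / (1 + g) * ((g / (1 + g) - L) / g ^ 2 / (- (g + 3) / (2 * s * (1 + g) ^ 2)))
              - L / g = alpha * A ^ 2 + beta * A - 1 / (1 + g)).
  { unfold alpha, beta, A.
    replace (3 / 2 * ((g / (1 + g) - L) / g ^ 2 / (- (g + 3) / (2 * s * (1 + g) ^ 2))) ^ 2)
      with (6 * s ^ 2 * (1 + g) ^ 4 * (L - g / (1 + g)) ^ 2 / (g ^ 4 * (g + 3) ^ 2))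
      by (field; repeat split; lra).
    replace (s / (1 + g) * ((g / (1 + g) - L) / g ^ 2 / (- (g + 3) / (2 * s * (1 + g) ^ 2))))
      with (2 * s ^ 2 * (1 + g) * (L - g / (1 + g)) / (g ^ 2 * (g + 3)))
      by (field; repeat split; lra).
    rewrite Hs2. field; lra. }
  assert (E0 : alpha * A0 ^ 2 + beta * A0 - 1 / (1 + g)
               = 2 * (3 * (1 + g) ^ 2 - g - 3) / ((g + 2) * (g + 3) ^ 2)).
  { unfold alpha, beta, A0. field; lra. }
  assert (0 <= 2 * (3 * (1 + g) ^ 2 - g - 3) / ((g + 2) * (g + 3) ^ 2))
    by (apply Rle_mult_inv_pos; nra).
  assert (alpha * A0 ^ 2 <= alpha * A ^ 2) by (apply Rmult_le_compat_l; [| apply pow_incr]; lra).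
  assert (beta * A0 <= beta * A) by (apply Rmult_le_compat_l; lra).
  lra.
Qed.

(* [Ffun q N m g = 0] means [energy_root (N * ln 2) q g = 1 / sqrt (m g)]
   ([Ffun_eq0_energy_root]); [m g] is the received energy. *)
Definition energy_root (a q g : R) : R := quad_root a (q * disp_ratio g) (cap_ratio g).

Definition energy_root' (a q g : R) : R :=
  (cap_ratio' g - q * disp_ratio' g * energy_root a q g)
  / (2 * a * energy_root a q g + q * disp_ratio g).

Section EnergyRoot.

Variables a q : R.
Hypothesis Ha : 0 < a.

Lemma energy_root_eq g : 0 < g ->
  a * energy_root a q g ^ 2 + q * disp_ratio g * energy_root a q g = cap_ratio g.
Proof. intros Hg. apply quad_root_eq; [exact Ha | apply cap_ratio_pos, Hg]. Qed.

Lemma energy_root_pos g : 0 < g -> 0 < energy_root a q g.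
Proof. intros Hg. apply quad_root_pos; [exact Ha | apply cap_ratio_pos, Hg]. Qed.

Lemma energy_root_discr_pos g : 0 < g -> 0 < 2 * a * energy_root a q g + q * disp_ratio g.
Proof. intros Hg. apply quad_root_discr_pos; [exact Ha | apply cap_ratio_pos, Hg]. Qed.

Lemma is_derive_energy_root g : 0 < g -> is_derive (energy_root a q) g (energy_root' a q g).
Proof.
  intros Hg.
  apply (is_derive_quad_root a (fun y => q * disp_ratio y) cap_ratio);
    [exact Ha | apply cap_ratio_pos, Hg | | apply is_derive_cap_ratio, Hg].
  apply is_derive_scal, is_derive_disp_ratio; lra.
Qed.

Hypothesis Hq : q <= sqrt (2 / 3 * a).

Lemma cap_ratio'_le_mul_energy_root g : 0 < g ->
  cap_ratio' g <= q * disp_ratio' g * energy_root a q g.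
Proof.
  intros Hg.
  set (v := energy_root a q g).
  assert (Hv : 0 < v) by apply (energy_root_pos g Hg).
  pose proof (disp_ratio'_neg g ltac:(lra)) as Hb'.
  pose proof (cap_ratio'_nonpos g Hg) as HC'.
  destruct (Rle_or_lt q 0) as [Hq0 | Hq0].
  { assert (0 <= q * disp_ratio' g * v) by (apply Rmult_le_pos; nra). lra. }
  (* [R0] is the largest value of [q v] allowed by the claim; the threshold on [q]
     puts [R0 / q] above the positive root [v]. *)
  set (R0 := cap_ratio' g / disp_ratio' g).
  assert (HR0 : 0 <= R0).
  { replace R0 with (- cap_ratio' g / - disp_ratio' g) by (unfold R0; field; lra).
    apply Rle_mult_inv_pos; lra. }
  assert (Hvq : v <= R0 / q).
  { apply (quad_pos_root_le a (q * disp_ratio g) (cap_ratio g)).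
    - exact Ha.
    - exact Hv.
    - apply energy_root_eq, Hg.
    - apply cap_ratio_pos, Hg.
    - apply Rle_mult_inv_pos; lra.
    - pose proof (pow2_le_of_le_sqrt q (2 / 3 * a) Hq0 Hq) as Hq2.
      pose proof (cap_ratio_le_deriv_ratio_quadratic g Hg) as HC. fold R0 in HC.
      assert (3 / 2 * R0 ^ 2 <= a * (R0 / q) ^ 2).
      { replace (a * (R0 / q) ^ 2) with (a / q ^ 2 * R0 ^ 2) by (field; lra).
        apply Rmult_le_compat_r; [nra |].
        apply (Rmult_le_reg_r (q ^ 2)); [nra |]. field_simplify; nra. }
      replace (q * disp_ratio g * (R0 / q)) with (disp_ratio g * R0) by (field; lra).
      lra. }
  assert (HqR0 : q * v <= R0).
  { apply (Rmult_le_compat_l q) in Hvq; [| lra].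
    replace (q * (R0 / q)) with R0 in Hvq by (field; lra). lra. }
  replace (cap_ratio' g) with (R0 * disp_ratio' g) by (unfold R0; field; lra).
  nra.
Qed.

Lemma energy_root'_nonpos g : 0 < g -> energy_root' a q g <= 0.
Proof.
  intros Hg.
  pose proof (cap_ratio'_le_mul_energy_root g Hg).
  pose proof (energy_root_discr_pos g Hg).
  unfold energy_root', Rdiv. apply Rmult_le_0_r; [lra |].
  left; apply Rinv_0_lt_compat; lra.
Qed.

Lemma energy_root_antitone g1 g2 : 0 < g1 <= g2 -> energy_root a q g2 <= energy_root a q g1.
Proof.
  intros Hg.
  enough (- energy_root a q g1 <= - energy_root a q g2) by lra.
  apply (nondecreasing_of_derive_nonneg (fun g => - energy_root a q g)
    (fun g => - energy_root' a q g)); [lra | |].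
  - intros g Hg'. apply (is_derive_opp (energy_root a q)), is_derive_energy_root; lra.
  - intros g Hg'. pose proof (energy_root'_nonpos g ltac:(lra)). lra.
Qed.

Lemma energy_root_mul_lt g : 0 < g -> q * energy_root a q g < sqrt (g + 2) * (1 + g).
Proof.
  intros Hg.
  set (v := energy_root a q g).
  assert (Hv : 0 < v) by apply (energy_root_pos g Hg).
  assert (Hs : 0 < sqrt (g + 2)) by (apply sqrt_lt_R0; lra).
  assert (Hsx : 0 < sqrt (g + 2) * (1 + g)) by (apply Rmult_lt_0_compat; lra).
  destruct (Rle_or_lt q 0) as [Hq0 | Hq0]; [nra |].
  assert (Hav : a * v ^ 2 <= 1).
  { pose proof (energy_root_eq g Hg) as E. fold v in E.
    pose proof (cap_ratio_le_1 g Hg).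
    pose proof (disp_ratio_pos g ltac:(lra)).
    assert (0 <= q * disp_ratio g * v) by (apply Rmult_le_pos; [apply Rmult_le_pos |]; lra).
    lra. }
  assert (Hqv2 : (q * v) ^ 2 < (sqrt (g + 2) * (1 + g)) ^ 2).
  { rewrite !Rpow_mult_distr, pow2_sqrt by lra.
    pose proof (pow2_le_of_le_sqrt q (2 / 3 * a) Hq0 Hq).
    assert (q ^ 2 * v ^ 2 <= 2 / 3 * a * v ^ 2) by (apply Rmult_le_compat_r; nra).
    assert (1 <= (1 + g) ^ 2) by nra.
    nra. }
  destruct (Rlt_or_le (q * v) (sqrt (g + 2) * (1 + g))) as [| Hge]; [assumption |].
  assert ((sqrt (g + 2) * (1 + g)) ^ 2 <= (q * v) ^ 2) by (apply pow_incr; lra).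
  lra.
Qed.

Lemma energy_root_add_deriv_pos g : 0 < g -> 0 < energy_root a q g + 2 * g * energy_root' a q g.
Proof.
  intros Hg.
  pose proof (energy_root_eq g Hg) as Hv.
  pose proof (energy_root_pos g Hg) as Hv0.
  pose proof (energy_root_mul_lt g Hg) as Hqv.
  pose proof (energy_root_discr_pos g Hg) as HS.
  unfold energy_root'.
  set (v := energy_root a q g) in *.
  set (S := 2 * a * v + q * disp_ratio g) in *.
  assert (Hs : 0 < sqrt (g + 2)) by (apply sqrt_lt_R0; lra).
  assert (Hs2 : sqrt (g + 2) ^ 2 = g + 2) by (apply pow2_sqrt; lra).
  (* [cap_ratio + g cap_ratio' = 1 / (1 + g)] and
     [disp_ratio + 2 g disp_ratio' = 2 / (sqrt (g + 2) (1 + g) ^ 2)] *)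
  assert (E : v * S + 2 * g * (cap_ratio' g - q * disp_ratio' g * v)
              = 2 * (sqrt (g + 2) * (1 + g) - q * v) / (sqrt (g + 2) * (1 + g) ^ 2)).
  { replace (v * S) with (2 * (a * v ^ 2 + q * disp_ratio g * v) - q * disp_ratio g * v)
      by (unfold S; ring).
    rewrite Hv. unfold cap_ratio, cap_ratio', disp_ratio, disp_ratio'.
    set (L := ln (1 + g)). set (s := sqrt (g + 2)) in *. clearbody L s.
    assert (Hg2 : g = s ^ 2 - 2) by lra. subst g.
    field. repeat split; nra. }
  replace (v + 2 * g * ((cap_ratio' g - q * disp_ratio' g * v) / S))
    with ((v * S + 2 * g * (cap_ratio' g - q * disp_ratio' g * v)) / S) by (field; lra).
  rewrite E. apply Rdiv_lt_0_compat; [| lra].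
  apply Rdiv_lt_0_compat; [lra |].
  apply Rmult_lt_0_compat; [| apply pow_lt]; lra.
Qed.

Lemma snr_mul_energy_root_sq_increasing g1 g2 : 0 < g1 < g2 ->
  g1 * energy_root a q g1 ^ 2 < g2 * energy_root a q g2 ^ 2.
Proof.
  intros Hg.
  apply (incr_function (fun g => g * energy_root a q g ^ 2) (Finite 0) p_infty
    (fun g => energy_root a q g * (energy_root a q g + 2 * g * energy_root' a q g)));
    simpl; try lra; intros g Hg0 _.
  - pose proof (is_derive_energy_root g Hg0) as Hd.
    auto_derive.
    + repeat split; eexists; exact Hd.
    + assert (E : Derive (fun x : R => energy_root a q x) g = energy_root' a q g)
        by (apply is_derive_unique; exact Hd).
      rewrite E. ring.
  - apply Rmult_lt_0_compat; [apply energy_root_pos | apply energy_root_add_deriv_pos]; lra.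
Qed.

End EnergyRoot.

Lemma ln_2_pos : 0 < ln 2.
Proof. pose proof ln_lt_2; lra. Qed.

Lemma Ffun_0 q N m : Ffun q N m 0 = N / m.
Proof.
  unfold Ffun, log2.
  replace (/ m * (1 - / (0 + 1) ^ 2)) with 0 by (rewrite Rplus_0_l, pow1, Rinv_1; ring).
  rewrite Rplus_0_r, ln_1, sqrt_0. unfold Rdiv; ring.
Qed.

Lemma Ffun_root_pos q N m g : 0 < N -> 0 < m -> 0 <= g -> Ffun q N m g = 0 -> 0 < g.
Proof.
  intros HN Hm Hg HF.
  destruct (Rle_lt_or_eq_dec 0 g Hg) as [| <-]; [assumption |].
  rewrite Ffun_0 in HF. assert (0 < N / m) by (apply Rdiv_lt_0_compat; lra). lra.
Qed.

Lemma Ffun_eq0_energy_root q N m g : 0 < N -> 0 < m -> 0 < g -> Ffun q N m g = 0 ->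
  energy_root (N * ln 2) q g ^ 2 = / (m * g).
Proof.
  intros HN Hm Hg HF.
  pose proof ln_2_pos as Hl2.
  assert (Hmg : 0 < / (m * g)) by (apply Rinv_0_lt_compat, Rmult_lt_0_compat; lra).
  set (z := sqrt (/ (m * g))).
  assert (Hz : 0 < z) by (apply sqrt_lt_R0; lra).
  assert (Hz2 : z ^ 2 = / (m * g)) by (apply pow2_sqrt; lra).
  assert (Hsqrt : sqrt (/ m * (1 - / (g + 1) ^ 2)) = g * disp_ratio g * z).
  { assert (Hb : 0 < disp_ratio g) by (apply disp_ratio_pos; lra).
    assert (Hs2 : sqrt (g + 2) ^ 2 = g + 2) by (apply pow2_sqrt; lra).
    replace (/ m * (1 - / (g + 1) ^ 2)) with ((g * disp_ratio g) ^ 2 * / (m * g)).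
    - rewrite sqrt_mult_alt, sqrt_pow2 by (try apply pow2_ge_0; nra). reflexivity.
    - replace ((g * disp_ratio g) ^ 2) with (g ^ 2 * sqrt (g + 2) ^ 2 / (1 + g) ^ 2)
        by (unfold disp_ratio; field; lra).
      rewrite Hs2. field; lra. }
  unfold Ffun, log2 in HF. rewrite Hsqrt in HF.
  rewrite <- Hz2. f_equal. symmetry.
  apply quad_root_unique; [nra | apply cap_ratio_pos, Hg | exact Hz |].
  unfold cap_ratio. rewrite Hz2.
  assert (E : N * ln 2 * / (m * g) + q * disp_ratio g * z - ln (1 + g) / g
              = ln 2 / g * (g * disp_ratio g * z * q / ln 2 - ln (1 + g) / ln 2 + N / m))
    by (field; lra).
  rewrite HF, Rmult_0_r in E. lra.
Qed.

Lemma Ffun_root_le q N m D g gs :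
  0 < N -> q <= sqrt (2 / 3 * (N * ln 2)) -> 0 < m <= D ->
  0 <= g -> Ffun q N m g = 0 -> 0 < gs -> Ffun q N D gs = 0 ->
  gs <= g /\ D * gs <= m * g.
Proof.
  intros HN Hq Hm Hg0 HF Hgs HFs.
  pose proof ln_2_pos as Hl2.
  assert (Ha : 0 < N * ln 2) by nra.
  assert (Hg : 0 < g) by (apply (Ffun_root_pos q N m); lra).
  pose proof (Ffun_eq0_energy_root q N m g HN ltac:(lra) Hg HF) as Hv.
  pose proof (Ffun_eq0_energy_root q N D gs HN ltac:(lra) Hgs HFs) as Hvs.
  assert (Hle : gs <= g).
  { destruct (Rle_or_lt gs g) as [| Hlt]; [assumption | exfalso].
    pose proof (snr_mul_energy_root_sq_increasing (N * ln 2) q Ha Hq g gs (conj Hg Hlt)) as H.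
    rewrite Hv, Hvs in H.
    replace (g * / (m * g)) with (/ m) in H by (field; lra).
    replace (gs * / (D * gs)) with (/ D) in H by (field; lra).
    apply Rinv_lt_cancel in H; lra. }
  split; [exact Hle |].
  pose proof (energy_root_antitone (N * ln 2) q Ha Hq gs g (conj Hgs Hle)) as H.
  pose proof (energy_root_pos (N * ln 2) q Ha g Hg).
  assert (Hsq : energy_root (N * ln 2) q g ^ 2 <= energy_root (N * ln 2) q gs ^ 2)
    by (apply pow_incr; lra).
  rewrite Hv, Hvs in Hsq.
  apply Rinv_le_contravar in Hsq; [| apply Rinv_0_lt_compat, Rmult_lt_0_compat; lra].
  rewrite !Rinv_inv in Hsq. lra.
Qed.

(* The threshold [2 sqrt (ln 2) / (4 - sqrt 2) = 0.644...] on [q / sqrt N] enters the proof only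
   through this weaker consequence. *)
Lemma le_sqrt_of_threshold q N : 0 < N ->
  q / sqrt N <= 2 * sqrt (ln 2) / (4 - sqrt 2) -> q <= sqrt (2 / 3 * (N * ln 2)).
Proof.
  intros HN Hc.
  pose proof ln_2_pos as Hl2.
  assert (HsN : 0 < sqrt N) by (apply sqrt_lt_R0; lra).
  assert (Hs2 : sqrt 2 ^ 2 = 2) by (apply pow2_sqrt; lra).
  assert (Hs2b : sqrt 2 <= 3 / 2) by (pose proof (sqrt_pos 2); nra).
  assert (Hconst : 2 / (4 - sqrt 2) <= sqrt (2 / 3)).
  { apply Rle_trans with (4 / 5).
    - apply (Rmult_le_reg_r (4 - sqrt 2)); [lra |]. field_simplify; lra.
    - rewrite <- (sqrt_pow2 (4 / 5)) by lra. apply sqrt_le_1; lra. }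
  rewrite (Rmult_comm N), <- Rmult_assoc, !sqrt_mult_alt by lra.
  apply (Rmult_le_compat_r (sqrt N)) in Hc; [| lra].
  replace (q / sqrt N * sqrt N) with q in Hc by (field; lra).
  apply (Rle_trans _ _ _ Hc).
  replace (2 * sqrt (ln 2) / (4 - sqrt 2) * sqrt N)
    with (2 / (4 - sqrt 2) * sqrt (ln 2) * sqrt N) by (field; lra).
  apply Rmult_le_compat_r; [lra |].
  apply Rmult_le_compat_r; [apply sqrt_pos | exact Hconst].
Qed.

Definition sic_power1 (g1 g2 gam1 gam2 : R) : R := gam1 * gam2 / g2 + gam1 / g1.

Lemma sic_powers g1 g2 p1 p2 gam1 gam2 : 0 < g1 -> 0 < g2 -> 0 <= p2 ->
  gam1 = p1 * g1 / (p2 * g1 + 1) -> gam2 = p2 * g2 ->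
  p1 = sic_power1 g1 g2 gam1 gam2 /\ p2 = gam2 / g2.
Proof.
  intros Hg1 Hg2 Hp2 -> ->. unfold sic_power1.
  split; field; repeat split; nra.
Qed.

Lemma sic_power_sum_le g1 g2 a1 a2 b1 b2 : 0 < g1 -> 0 < g2 ->
  0 <= a1 <= b1 -> 0 <= a2 <= b2 ->
  sic_power1 g1 g2 a1 a2 + a2 / g2 <= sic_power1 g1 g2 b1 b2 + b2 / g2.
Proof.
  intros Hg1 Hg2 Ha1 Ha2. unfold sic_power1, Rdiv.
  pose proof (Rinv_0_lt_compat g1 Hg1). pose proof (Rinv_0_lt_compat g2 Hg2).
  assert (a1 * a2 <= b1 * b2) by (apply Rmult_le_compat; lra).
  nra.
Qed.

Lemma sic_energy_le g1 g2 m1 m2 D1 D2 a1 a2 b1 b2 : 0 < g1 -> 0 < g2 ->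
  0 <= D1 * a1 <= m1 * b1 -> 0 <= a2 <= b2 -> D2 * a2 <= m2 * b2 ->
  D1 * sic_power1 g1 g2 a1 a2 + D2 * (a2 / g2)
  <= m1 * sic_power1 g1 g2 b1 b2 + m2 * (b2 / g2).
Proof.
  intros Hg1 Hg2 H1 H2 H3. unfold sic_power1, Rdiv.
  pose proof (Rinv_0_lt_compat g1 Hg1). pose proof (Rinv_0_lt_compat g2 Hg2).
  assert (D1 * a1 * a2 <= m1 * b1 * b2) by (apply Rmult_le_compat; lra).
  nra.
Qed.

Section Problem.

Variables g1 g2 mhat D1 D2 Pmax q1 q2 N1 N2 gs1 gs2 : R.
Hypotheses (Hg1 : 0 < g1) (Hg2 : 0 < g2) (Hmhat : 0 < mhat) (HN1 : 0 < N1) (HN2 : 0 < N2).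
Hypotheses (Hq1 : q1 <= sqrt (2 / 3 * (N1 * ln 2))) (Hq2 : q2 <= sqrt (2 / 3 * (N2 * ln 2))).
Hypotheses (Hgs1 : 0 < gs1) (HF1 : Ffun q1 N1 D1 gs1 = 0).
Hypotheses (Hgs2 : 0 < gs2) (HF2 : Ffun q2 N2 D2 gs2 = 0).

Lemma feasible_dominated m1 m2 p1 p2 gam1 gam2 :
  feasible g1 g2 mhat D1 D2 Pmax q1 q2 N1 N2 m1 m2 p1 p2 gam1 gam2 ->
  sic_power1 g1 g2 gs1 gs2 + gs2 / g2 <= p1 + p2 /\
  D1 * sic_power1 g1 g2 gs1 gs2 + D2 * (gs2 / g2) <= m1 * p1 + m2 * p2.
Proof.
  intros (HFm1 & HFm2 & Hm1 & Hm2 & Hp1 & Hp2 & _ & Hgam1 & Hgam2).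
  destruct (sic_powers g1 g2 p1 p2 gam1 gam2 Hg1 Hg2 Hp2 Hgam1 Hgam2) as [-> ->].
  assert (0 <= gam1) by (rewrite Hgam1; apply Rle_mult_inv_pos; nra).
  assert (0 <= gam2) by (rewrite Hgam2; nra).
  destruct (Ffun_root_le q1 N1 m1 D1 gam1 gs1) as [Hle1 Hen1]; try lra.
  destruct (Ffun_root_le q2 N2 m2 D2 gam2 gs2) as [Hle2 Hen2]; try lra.
  split.
  - apply sic_power_sum_le; lra.
  - apply sic_energy_le; nra.
Qed.

Lemma sic_candidate_feasible :
  mhat <= D1 -> mhat <= D2 -> sic_power1 g1 g2 gs1 gs2 + gs2 / g2 <= Pmax ->
  feasible g1 g2 mhat D1 D2 Pmax q1 q2 N1 N2
    D1 D2 (sic_power1 g1 g2 gs1 gs2) (gs2 / g2) gs1 gs2.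
Proof.
  intros HD1 HD2 HP.
  assert (0 < gs2 / g2) by (apply Rdiv_lt_0_compat; lra).
  assert (0 < sic_power1 g1 g2 gs1 gs2).
  { apply Rplus_lt_0_compat; apply Rdiv_lt_0_compat; nra. }
  repeat split; try assumption; try lra.
  - unfold sic_power1. field. split; [lra | nra].
  - field. lra.
Qed.

End Problem.

Theorem theorem1
  (h1 h2 : C) (D1 D2 mhat Pmax N1 N2 eps1 eps2 q1 q2 : R)
  (Hh1 : h1 <> 0%C) (Hh2 : h2 <> 0%C) (Hh12 : Cmod h1 <= Cmod h2)
  (HD : D1 < D2) (Hmhat : 0 < mhat) (HP : 0 < Pmax)
  (HN1 : 0 < N1) (HN2 : 0 < N2)
  (He1 : 0 < eps1 < 1) (He2 : 0 < eps2 < 1)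
  (Hq1 : Qfun q1 = eps1) (Hq2 : Qfun q2 = eps2)
  (Hc1 : q1 / sqrt N1 <= 2 * sqrt (ln 2) / (4 - sqrt 2))
  (Hc2 : q2 / sqrt N2 <= 2 * sqrt (ln 2) / (4 - sqrt 2))
  (Hfeas : exists m1 m2 p1 p2 gam1 gam2,
     feasible (Cmod h1 ^ 2) (Cmod h2 ^ 2) mhat D1 D2 Pmax q1 q2 N1 N2
       m1 m2 p1 p2 gam1 gam2)
  (gs1 gs2 : R)
  (Hgs1 : 0 < gs1) (HF1 : Ffun q1 N1 D1 gs1 = 0)
  (Hgs2 : 0 < gs2) (HF2 : Ffun q2 N2 D2 gs2 = 0) :
  let ps1 := gs1 * gs2 / (Cmod h2 ^ 2) + gs1 / (Cmod h1 ^ 2) in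
  let ps2 := gs2 / (Cmod h2 ^ 2) in
  feasible (Cmod h1 ^ 2) (Cmod h2 ^ 2) mhat D1 D2 Pmax q1 q2 N1 N2
    D1 D2 ps1 ps2 gs1 gs2 /\
  (forall m1 m2 p1 p2 gam1 gam2,
     feasible (Cmod h1 ^ 2) (Cmod h2 ^ 2) mhat D1 D2 Pmax q1 q2 N1 N2
       m1 m2 p1 p2 gam1 gam2 ->
     D1 * ps1 + D2 * ps2 <= m1 * p1 + m2 * p2).
Proof.
  intros ps1 ps2.
  assert (Hg1 : 0 < Cmod h1 ^ 2) by (apply pow_lt, Cmod_gt_0, Hh1).
  assert (Hg2 : 0 < Cmod h2 ^ 2) by (apply pow_lt, Cmod_gt_0, Hh2).
  pose proof (feasible_dominated _ _ mhat D1 D2 Pmax q1 q2 N1 N2 gs1 gs2 Hg1 Hg2 Hmhat HN1 HN2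
                (le_sqrt_of_threshold q1 N1 HN1 Hc1) (le_sqrt_of_threshold q2 N2 HN2 Hc2)
                Hgs1 HF1 Hgs2 HF2) as Hdom.
  split; [| intros m1 m2 p1 p2 gam1 gam2 Hf; exact (proj2 (Hdom _ _ _ _ _ _ Hf))].
  destruct Hfeas as (m1 & m2 & p1 & p2 & gam1 & gam2 & Hf).
  destruct (Hdom _ _ _ _ _ _ Hf) as [Hpow _].
  destruct Hf as (_ & _ & Hm1 & Hm2 & _ & _ & HPmax & _).
  apply sic_candidate_feasible; lra.
Qed.
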